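(* Let $f,g:\mathbb{R}^n\to[0,+\infty)$ and $h_1,h_2:\mathbb{R}^n\to\mathbb{R}$, let $C\subseteq\mathbb{R}^n$ be closed and convex, $\Omega:=\{x:g(x)\neq0\}$, $C\cap\Omega\neq\emptyset$, and assume: $f$ is convex; $g$ is differentiable with locally Lipschitz gradient; $h_1$ is differentiable with locally Lipschitz gradient; $h_2$ is convex. Let $F(x)=f^2(x)/g(x)+h_1(x)-h_2(x)$ for $x\in\Omega\cap C$ and $F(x)=+\infty$ otherwise, let $x^0\in\mathrm{dom}F$, and assume that $\mathcal{X}_0:=\{x\in\mathrm{dom}F:F(x)\le F(x^0)\}$ is compact. Then $m_g:=\inf\{g(x):x\in\mathcal{X}_0\}>0$, and there exists $\Delta>0$ such that, with $\mathcal{X}_\Delta:=\{x\in\mathbb{R}^n:\mathrm{dist}(x,\mathcal{X}_0)\le\Delta\}$: (i) $g(x)\ge m_g/2$ for all $x\in\mathcal{X}_\Delta$; (ii) $f$, $g$, $f/g$, $\nabla g$ and $\nabla h_1$ are globally Lipschitz continuous on $\mathcal{X}_\Delta$; (iii) $M_{\nabla g}:=\sup\{\|\nabla g(x)\|_2:x\in\mathcal{X}_\Delta\}$, $M_g:=\sup\{g(x):x\in\mathcal{X}_\Delta\}$ and $M_{f/g}:=\sup\{f(x)/g(x):x\in\mathcal{X}_\Delta\}$ are finite.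
   Context: $\mathrm{dist}(x,S)=\inf\{\|x-y\|_2:y\in S\}$. *)

From HB Require Import structures.
From mathcomp Require Import all_boot all_order all_algebra.
From mathcomp Require Import all_classical all_reals all_analysis.
Set Implicit Arguments. Unset Strict Implicit. Unset Printing Implicit Defensive.
Import Order.TTheory GRing.Theory Num.Theory.
Import numFieldNormedType.Exports.
Local Open Scope classical_set_scope.
Local Open Scope ring_scope.

Section Defs.
Variable R : realType.

(* Euclidean norm on R^n (the library norm on 'rV is the max norm). *)
Definition norm2 {n : nat} (x : 'rV[R]_n) : R :=
  Num.sqrt (\sum_(i < n) x 0 i ^+ 2).

Definition dist2 {n : nat} (x : 'rV[R]_n) (S : set 'rV[R]_n) : R :=
  inf [set norm2 (x - y) | y in S].

Definition ball2 {n : nat} (x : 'rV[R]_n) (r : R) : set 'rV[R]_n :=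
  [set y | norm2 (y - x) <= r].

Definition grad {n : nat} (g : 'rV[R]_n -> R) (x : 'rV[R]_n) : 'rV[R]_n :=
  \row_(i < n) ('D_(delta_mx 0 i) g x).

Definition convex_set_on {n : nat} (C : set 'rV[R]_n) : Prop :=
  forall x y (t : R), C x -> C y -> 0 <= t <= 1 ->
    C (t *: x + (1 - t) *: y).

Definition convex_fun_on {n : nat} (f : 'rV[R]_n -> R) : Prop :=
  forall x y (t : R), 0 <= t <= 1 ->
    f (t *: x + (1 - t) *: y) <= t * f x + (1 - t) * f y.

Definition lipschitz_on_R {n : nat} (A : set 'rV[R]_n) (phi : 'rV[R]_n -> R) :=
  exists L : R, forall x y, A x -> A y -> `|phi x - phi y| <= L * norm2 (x - y).

Definition lipschitz_on_V {n m : nat} (A : set 'rV[R]_n)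
    (phi : 'rV[R]_n -> 'rV[R]_m) :=
  exists L : R, forall x y, A x -> A y ->
    norm2 (phi x - phi y) <= L * norm2 (x - y).

Definition locally_lipschitz_V {n m : nat} (phi : 'rV[R]_n -> 'rV[R]_m) :=
  forall x, exists2 r : R, 0 < r & lipschitz_on_V (ball2 x r) phi.

Definition Fobj {n : nat} (f g h1 h2 : 'rV[R]_n -> R) (C : set 'rV[R]_n)
    (x : 'rV[R]_n) : \bar R :=
  if (x \in C) && (g x != 0) then (f x ^+ 2 / g x + h1 x - h2 x)%:E
  else +oo%E.

Definition domF {n : nat} (F : 'rV[R]_n -> \bar R) : set 'rV[R]_n :=
  [set x | (F x < +oo)%E].

Definition sublevel {n : nat} (F : 'rV[R]_n -> \bar R) (x0 : 'rV[R]_n) :=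
  [set x | domF F x /\ (F x <= F x0)%E].

End Defs.

(* Convex functions are locally bounded, hence locally Lipschitz, and a
   function with locally Lipschitz gradient is locally Lipschitz by the mean
   value theorem.  A finite subcover of the compact set X0 then gives a single
   Lipschitz constant and a single bound on a whole neighbourhood of X0.  On X0
   the function g is positive (dom F lies in Omega) and continuous, so mg > 0,
   and taking Delta small with respect to mg and the Lipschitz constant of g
   keeps g >= mg/2 on X_Delta, which makes f/g Lipschitz and bounded there.
   The estimates are proved for the max norm, the library norm on 'rV, and
   transferred to the Euclidean norm at the end. *)

From HB Require Import structures.
From mathcomp Require Import all_boot all_order all_algebra.
From mathcomp Require Import all_classical all_reals all_analysis.
From mathcomp Require Import finmap ring lra.
Set Implicit Arguments. Unset Strict Implicit. Unset Printing Implicit Defensive.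
Import Order.TTheory GRing.Theory Num.Theory.
Import numFieldNormedType.Exports.
Local Open Scope classical_set_scope.
Local Open Scope ring_scope.

Section LipschitzNearCompact.
Variables (R : realType) (U V : normedModType R).

Definition lipschitz_near (phi : U -> V) (x : U) :=
  exists2 r, 0 < r & exists k, k.-lipschitz_(ball x r) phi.

Lemma klipschitzS (A B : set U) (phi : U -> V) k :
  A `<=` B -> k.-lipschitz_B phi -> k.-lipschitz_A phi.
Proof. by move=> AB lip [y z] [/AB By /AB Bz]; exact: lip. Qed.

Lemma le_bigcup_ball (K : set U) d e : d <= e ->
  \bigcup_(a in K) ball a d `<=` \bigcup_(a in K) ball a e.
Proof. by move=> de y [a Ka ay]; exists a => //; exact: le_ball ay. Qed.

Lemma klipschitz_ball_bound (phi : U -> V) x r k y :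
  k.-lipschitz_(ball x r) phi -> ball x r y -> `|phi y| <= `|phi x| + `|k| * r.
Proof.
move=> lip xy; have xx : ball x r x.
  by move: (xy); rewrite -!ball_normE /= subrr normr0; apply: le_lt_trans.
have /= lipyx := lip (y, x) (conj xy xx).
rewrite -ball_normE /= distrC in xy.
have kyx : k * `|y - x| <= `|k| * r.
  by rewrite (le_trans (ler_wpM2r _ (ler_norm k))) // ler_wpM2l // ltW.
have := lerB_dist (phi y) (phi x); lra.
Qed.

Lemma lipschitz_near_bounded (phi : U -> V) x : lipschitz_near phi x ->
  exists2 r, 0 < r & exists M, forall y, ball x r y -> `|phi y| <= M.
Proof.
move=> [r r0 [k lip]]; exists r => //; exists (`|phi x| + `|k| * r).
by move=> y; exact: klipschitz_ball_bound.
Qed.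

Lemma compact_uniform_ball_cover (K : set U) (r : U -> R) :
  compact K -> (forall x, K x -> 0 < r x) ->
  exists (D : {fset U}) (d : R), [/\ {subset D <= K}, 0 < d &
    forall y z, (\bigcup_(a in K) ball a d) y -> `|y - z| < d ->
      exists2 x, x \in D & ball x (r x) y /\ ball x (r x) z].
Proof.
rewrite compact_cover => cK r_gt0.
have [D DK cov] : finite_subset_cover K (fun x => ball x (r x / 2)) K.
  apply: cK => [x _|y Ky]; first exact: ball_open.
  by exists y => //; apply: ballxx; rewrite divr_gt0 ?r_gt0.
pose d := \big[Num.min/1]_(x <- D) (r x / 4).
have d_gt0 : 0 < d.
  by rewrite /d big_seq; apply: lt_bigmin => // x /DK/set_mem/r_gt0/divr_gt0->.
exists D, d; split => // y z [a Ka ay] yz.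
have [x xD xa] := cov a Ka; exists x => //.
have dr : d <= r x / 4 by exact: ge_bigmin_seq.
move: xa ay; rewrite -!ball_normE /= => xa ay.
have := ler_distD a x y; have := ler_distD y x z; split; lra.
Qed.

Lemma lipschitz_bounded_near_compact (K : set U) (phi : U -> V) :
  compact K -> (forall x, K x -> lipschitz_near phi x) ->
  exists2 d, 0 < d & exists k M, [/\ 0 <= k,
    k.-lipschitz_(\bigcup_(a in K) ball a d) phi &
    forall y, (\bigcup_(a in K) ball a d) y -> `|phi y| <= M].
Proof.
move=> cK phi_lip.
have /choice[rk rkP] : forall x, exists p : R * R,
    K x -> 0 < p.1 /\ p.2.-lipschitz_(ball x p.1) phi.
  move=> x; have [/phi_lip[r r0 [k lip]]|nKx] := pselect (K x).
    by exists (r, k).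
  by exists (0, 0) => /nKx.
pose r x := (rk x).1; pose k x := (rk x).2.
have [D [d [DK d_gt0 cover]]] :=
  compact_uniform_ball_cover cK (fun x Kx => (rkP x Kx).1).
have lipD x : x \in D -> (k x).-lipschitz_(ball x (r x)) phi.
  by move=> /DK/set_mem/rkP[].
pose B x := `|phi x| + `|k x| * r x.
pose M := \big[Num.max/0]_(x <- D) B x.
pose kD := \big[Num.max/0]_(x <- D) k x.
have M_ge0 : 0 <= M := bigmax_ge_id _ _ _ _.
have phi_le_M y : (\bigcup_(a in K) ball a d) y -> `|phi y| <= M.
  move=> Ny; have yy : `|y - y| < d by rewrite subrr normr0.
  have [x xD [xy _]] := cover y y Ny yy.
  apply: le_trans (klipschitz_ball_bound (lipD x xD) xy) _.
  exact: (le_bigmax_seq _ _ xpredT _ xD).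
exists d => //; exists (Num.max kD (2 * M / d)), M.
have bound_ge0 : 0 <= 2 * M / d by apply: divr_ge0; [exact: mulr_ge0 | exact: ltW].
split=> //; first by rewrite le_max bound_ge0 orbT.
move=> [y z] [Ny Nz] /=; have [yz|yz] := ltP `|y - z| d.
  have [x xD [xy xz]] := cover y z Ny yz.
  apply: le_trans (lipD x xD (y, z) (conj xy xz)) _; apply: ler_wpM2r => //.
  by rewrite le_max (le_bigmax_seq _ _ xpredT _ xD).
have far : 2 * M <= 2 * M / d * `|y - z|.
  by rewrite mulrAC ler_pdivlMr // ler_wpM2l // mulr_ge0.
have := ler_normB (phi y) (phi z); have := phi_le_M y Ny; have := phi_le_M z Nz.
have : 2 * M / d * `|y - z| <= Num.max kD (2 * M / d) * `|y - z|.
  by rewrite ler_wpM2r // le_max lexx orbT.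
lra.
Qed.
End LipschitzNearCompact.

Section RowNorms.
Variables (R : realType) (n : nat).
Implicit Types (v : 'rV[R]_n) (c : R).

Lemma mx_norm_coord v i : `|v 0 i| <= `|v|.
Proof.
rewrite [leRHS]/Num.Def.normr /= mx_normrE.
by apply/bigmax_geP; right; exists (0, i).
Qed.

Lemma mx_norm_le v c : 0 <= c -> (forall i, `|v 0 i| <= c) -> `|v| <= c.
Proof.
move=> c0 vc; rewrite [leLHS]/Num.Def.normr /= mx_normrE.
by apply: bigmax_le => // -[i j] _; rewrite ord1.
Qed.

Lemma normr_le_norm2 v : `|v| <= norm2 v.
Proof.
apply: mx_norm_le => [|i]; first exact: sqrtr_ge0.
rewrite /norm2 -sqrtr_sqr ler_sqrt ?sumr_ge0 // => [|j _]; last exact: sqr_ge0.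
by rewrite (bigD1 i) //= lerDl sumr_ge0 // => j _; exact: sqr_ge0.
Qed.

Lemma norm2_le_normr v : norm2 v <= n.+1%:R * `|v|.
Proof.
rewrite /norm2 -[leRHS]ger0_norm ?mulr_ge0 // -sqrtr_sqr ler_sqrt ?sqr_ge0 //.
have coord_sq i : v 0 i ^+ 2 <= `|v| ^+ 2.
  by rewrite -real_normK ?num_real // lerXn2r ?nnegrE // mx_norm_coord.
apply: le_trans (ler_sum _ (fun i _ => coord_sq i)) _.
rewrite sumr_const card_ord -[_ *+ n]mulr_natl exprMn; apply: ler_wpM2r; first exact: sqr_ge0.
by rewrite -natrX ler_nat (leq_trans (leqnSn n)) // leq_pmulr.
Qed.

Lemma ball_sub_ball2 (x : 'rV[R]_n) (r : R) : ball x (r / n.+1%:R) `<=` ball2 x r.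
Proof.
move=> y; rewrite -ball_normE /ball2 /= distrC ltr_pdivlMr // => xy.
by rewrite (le_trans (norm2_le_normr _)) // mulrC ltW.
Qed.
End RowNorms.

Section EuclideanLipschitz.
Variables (R : realType) (n : nat).

Lemma locally_lipschitz_V_near m (phi : 'rV[R]_n -> 'rV[R]_m) :
  locally_lipschitz_V phi -> forall x, lipschitz_near phi x.
Proof.
move=> phi_lip x; have [r r_gt0 [k lip]] := phi_lip x.
exists (r / n.+1%:R); first by rewrite divr_gt0.
exists (`|k| * n.+1%:R) => -[y z] [/ball_sub_ball2 xy /ball_sub_ball2 xz] /=.
apply: le_trans (normr_le_norm2 _) _; apply: le_trans (lip y z xy xz) _.
rewrite -mulrA (le_trans (ler_wpM2r (sqrtr_ge0 _) (ler_norm k))) //.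
by rewrite ler_wpM2l // norm2_le_normr.
Qed.

Lemma klipschitz_lipschitz_on_R (A : set 'rV[R]_n) (phi : 'rV[R]_n -> R) k :
  k.-lipschitz_A phi -> lipschitz_on_R A phi.
Proof.
move=> lip; exists `|k| => x y Ax Ay; have /= := lip (x, y) (conj Ax Ay).
move/le_trans; apply; rewrite (le_trans (ler_wpM2r (normr_ge0 _) (ler_norm k))) //.
by rewrite ler_wpM2l // normr_le_norm2.
Qed.

Lemma klipschitz_lipschitz_on_V m (A : set 'rV[R]_n) (phi : 'rV[R]_n -> 'rV[R]_m) k :
  k.-lipschitz_A phi -> lipschitz_on_V A phi.
Proof.
move=> lip; exists (m.+1%:R * `|k|) => x y Ax Ay; have /= := lip (x, y) (conj Ax Ay).
move=> phi_xy; rewrite (le_trans (norm2_le_normr _)) // -mulrA ler_wpM2l //.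
rewrite (le_trans phi_xy) // (le_trans (ler_wpM2r (normr_ge0 _) (ler_norm k))) //.
by rewrite ler_wpM2l // normr_le_norm2.
Qed.
End EuclideanLipschitz.

Section ConvexLipschitz.
Variables (R : realType) (n : nat) (f : 'rV[R]_n -> R).
Hypothesis f_convex : convex_fun_on f.

Lemma convex_le_max (a b : 'rV[R]_n) l : 0 <= l <= 1 ->
  f (l *: a + (1 - l) *: b) <= Num.max (f a) (f b).
Proof.
move=> /[dup] l01 /andP[l0 l1]; apply: le_trans (f_convex a b l01) _.
have fa : f a <= Num.max (f a) (f b) by rewrite le_max lexx.
have fb : f b <= Num.max (f a) (f b) by rewrite le_max lexx orbT.
nra.
Qed.

Lemma convex_line_le_max (x e : 'rV[R]_n) r s : 0 < r -> `|s| <= r ->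
  f (x + s *: e) <= Num.max (f (x + r *: e)) (f (x - r *: e)).
Proof.
move=> r_gt0; rewrite ler_norml => /andP[sr rs].
pose l := (s + r) / (2 * r).
have l01 : 0 <= l <= 1.
  by rewrite divr_ge0 ?ler_pdivrMr ?mulr_ge0 /=; lra.
have -> : x + s *: e = l *: (x + r *: e) + (1 - l) *: (x - r *: e).
  by apply/rowP => i; rewrite !mxE /l; field; rewrite gt_eqF.
exact: convex_le_max.
Qed.

Lemma convex_bounded_above_box (x : 'rV[R]_n) k r : 0 < r -> exists U, forall y,
  `|y - x| <= r -> (forall i : 'I_n, (k <= i)%N -> y 0 i = x 0 i) -> f y <= U.
Proof.
elim: k r => [|k IH] r r_gt0.
  by exists (f x) => y _ yx; have -> : y = x by apply/rowP => i; rewrite yx.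
have [kn|nk] := ltnP k n; last first.
  have [U fU] := IH r r_gt0; exists U => y yx yk; apply: fU => // i ki.
  by move: (leq_trans (ltn_ord i) nk); rewrite ltnNge ki.
pose ik := Ordinal kn; pose e : 'rV[R]_n := delta_mx 0 ik.
have r2_gt0 : 0 < 2 * r by rewrite mulr_gt0.
have [U fU] := IH (2 * r) r2_gt0.
exists ((U + Num.max (f (x + (2 * r) *: e)) (f (x - (2 * r) *: e))) / 2).
move=> y yx yk; pose t := y 0 ik - x 0 ik; pose z := y - t *: e.
have coord_le i : `|y 0 i - x 0 i| <= r.
  by have := mx_norm_coord (y - x) i; rewrite !mxE => /le_trans; apply.
have t_le : `|t| <= r := coord_le ik.
have zx : `|z - x| <= r.
  apply: mx_norm_le => [|i]; first exact: ltW.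
  rewrite !mxE; have [->|ne] := eqVneq i ik.
    by rewrite eqxx mulr1 /t opprB addrCA subrr addr0 subrr normr0 ltW.
  by rewrite /= mulr0 subr0 coord_le.
(* [y] is the midpoint of [2 z - x], whose coordinates from [k] on agree with
   those of [x], and of a point on the line through [x] along [e]. *)
have -> : y = (1 / 2) *: (z + (z - x)) + (1 - 1 / 2) *: (x + (2 * t) *: e).
  by apply/rowP => i; rewrite !mxE /t; field.
apply: le_trans (f_convex _ _ _) _; first by apply/andP; split; lra.
have fz : f (z + (z - x)) <= U.
  apply: fU => [|i ki].
    have -> : z + (z - x) - x = 2 *: (z - x) by apply/rowP => i; rewrite !mxE; ring.
    by rewrite normrZ ger0_norm // ler_wpM2l.
  rewrite !mxE /t; have [->|ne] := eqVneq i ik; first by rewrite eqxx mulr1; ring.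
  have ki' : (k < i)%N.
    by rewrite ltn_neqAle ki andbT; apply: contra ne => /eqP ki_eq; apply/eqP/val_inj.
  by rewrite /= mulr0 subr0 yk //; ring.
have t2_le : `|2 * t| <= 2 * r by rewrite normrM ger0_norm // ler_wpM2l.
have := convex_line_le_max x e r2_gt0 t2_le; lra.
Qed.

Lemma convex_bounded_near (x : 'rV[R]_n) r : 0 < r ->
  exists M, forall y, `|y - x| <= r -> `|f y| <= M.
Proof.
move=> r_gt0; have [U fU] := convex_bounded_above_box x n r_gt0.
have f_le_U y : `|y - x| <= r -> f y <= U.
  by move=> yx; apply: fU => // i; rewrite leqNgt ltn_ord.
exists (`|U| + `|2 * f x - U|) => y yx.
have half01 : 0 <= (1 / 2 : R) <= 1 by apply/andP; split; lra.
have := f_convex y (x + (x - y)) half01.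
have -> : (1 / 2) *: y + (1 - 1 / 2) *: (x + (x - y)) = x.
  by apply/rowP => i; rewrite !mxE; field.
have f_refl : f (x + (x - y)) <= U by apply: f_le_U; rewrite addrC addKr distrC.
have := ler_norm (U - 2 * f x); rewrite -normrN opprB => U_fx f_mid.
have := f_le_U y yx; have := ler_norm U; have := normr_ge0 U.
have := normr_ge0 (2 * f x - U); rewrite ler_norml => *; apply/andP; split; lra.
Qed.

Lemma convex_sub_le (x y z : 'rV[R]_n) M :
  (forall w, `|w - x| <= 2 -> `|f w| <= M) ->
  ball x 1 y -> ball x 1 z -> f z - f y <= 2 * M * `|z - y|.
Proof.
rewrite -!ball_normE /= => f_le_M xy xz.
have [->|zy] := eqVneq z y; first by rewrite !subrr normr0 mulr0.
set d := `|z - y|; have d_gt0 : 0 < d by rewrite normr_gt0 subr_eq0.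
(* [w] lies on the ray from [y] through [z], at distance 1 beyond [z]. *)
pose w := y + (1 + d^-1) *: (z - y).
have wx : `|w - x| <= 2.
  have -> : w - x = (z - x) + d^-1 *: (z - y).
    by rewrite /w scalerDl scale1r addrA [y + _]addrC subrK addrAC.
  rewrite (le_trans (ler_normD _ _)) // normrZ ger0_norm ?invr_ge0 ?ltW //.
  by rewrite mulVf ?gt_eqF // distrC; lra.
pose l := d / (d + 1).
have l01 : 0 <= l <= 1.
  by apply/andP; split; [rewrite divr_ge0 //; lra | rewrite ler_pdivrMr; lra].
have := f_convex w y l01.
have -> : l *: w + (1 - l) *: y = z.
  by apply/rowP => i; rewrite !mxE /l; field; lra.
have fy : `|f y| <= M by apply: f_le_M; rewrite distrC; lra.
have l_le_d : l <= d by rewrite /l ler_pdivrMr; nra.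
move: (f_le_M w wx) fy l01; rewrite !ler_norml => /andP[? ?] /andP[? ?] /andP[? ?].
nra.
Qed.

Lemma convex_lipschitz_near (x : 'rV[R]_n) : lipschitz_near f x.
Proof.
have [M f_le_M] := convex_bounded_near x (ltr0Sn _ 1).
exists 1 => //; exists (2 * M) => -[y z] [xy xz] /=.
rewrite ler_norml; apply/andP; split; last exact: convex_sub_le f_le_M xz xy.
by rewrite lerNl opprB distrC; exact: convex_sub_le f_le_M xy xz.
Qed.
End ConvexLipschitz.

Section GradientLipschitz.
Variables (R : realType) (n : nat).
Implicit Types (g : 'rV[R]_n -> R) (x y z v : 'rV[R]_n).

Lemma derive_line g z v t : derivable g (z + t *: v) v ->
  is_derive t 1 (fun s => g (z + s *: v)) ('D_v g (z + t *: v)).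
Proof.
have E : (fun h : R => h^-1 *: (((fun s => g (z + s *: v)) \o shift t) (h *: 1)
            - g (z + t *: v))) =
         (fun h : R => h^-1 *: ((g \o shift (z + t *: v)) (h *: v) - g (z + t *: v))).
  apply: funext => h /=; congr (_ *: (g _ - _)).
  by rewrite scaler1 scalerDl addrCA addrC.
by move=> dg; split; [rewrite /derivable E | rewrite /derive E].
Qed.

Lemma derive_grad g p v : differentiable g p ->
  'D_v g p = \sum_i v 0 i * grad g p 0 i.
Proof.
move=> dg; rewrite deriveE // {1}(row_sum_delta v) linear_sum.
by apply: eq_bigr => i _; rewrite linearZ /= -deriveE // /grad mxE.
Qed.

Lemma ball_segment x r y z c : ball x r y -> ball x r z -> 0 <= c <= 1 ->
  ball x r (z + c *: (y - z)).
Proof.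
rewrite -!ball_normE /= => xy xz /andP[c0 c1].
have -> : x - (z + c *: (y - z)) = (1 - c) *: (x - z) + c *: (x - y).
  by apply/rowP => i; rewrite !mxE; ring.
apply: le_lt_trans (ler_normD _ _) _; rewrite !normrZ !ger0_norm ?subr_ge0 //.
set m := Num.max `|x - z| `|x - y|.
have m_lt : m < r by rewrite gt_max xy xz.
have zm : `|x - z| <= m by rewrite le_max lexx.
have ym : `|x - y| <= m by rewrite le_max lexx orbT.
nra.
Qed.

Lemma grad_bounded_lipschitz g x r B : (forall p, differentiable g p) ->
  (forall p, ball x r p -> `|grad g p| <= B) -> (n%:R * B).-lipschitz_(ball x r) g.
Proof.
move=> g_diff grad_le -[y z] [xy xz] /=; pose v := y - z.
have phi_derive (t : R) : is_derive t 1 (fun s => g (z + s *: v)) ('D_v g (z + t *: v)).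
  by apply: derive_line; apply: diff_derivable.
have phi_cont : {within `[0, 1], continuous (fun s => g (z + s *: v))}.
  apply: continuous_subspaceT => t; apply: differentiable_continuous.
  by apply/derivable1_diffP; exact: (@ex_derive _ _ _ _ _ _ _ (phi_derive t)).
have [c c01 mvt] := MVT_segment ler01 (fun t _ => phi_derive t) phi_cont.
have -> : g y - g z = g (z + 1 *: v) - g (z + 0 *: v).
  by rewrite scale0r addr0 scale1r /v [z + _]addrC subrK.
rewrite mvt subr0 mulr1 derive_grad //.
have B_grad i : `|grad g (z + c *: v) 0 i| <= B.
  apply: le_trans (mx_norm_coord _ i) (grad_le _ (ball_segment xy xz _)).
  by move: c01; rewrite in_itv.
apply: le_trans (ler_norm_sum _ _ _) _.
apply: (@le_trans _ _ (\sum_(i < n) `|v| * B)).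
  by apply: ler_sum => i _; rewrite normrM ler_pM ?mx_norm_coord.
by rewrite sumr_const card_ord -[_ *+ n]mulr_natl mulrCA mulrC.
Qed.

Lemma differentiable_lipschitz_near g : (forall x, differentiable g x) ->
  locally_lipschitz_V (grad g) -> forall x, lipschitz_near g x.
Proof.
move=> g_diff grad_lip x.
have [r r_gt0 [B grad_le]] :=
  lipschitz_near_bounded (locally_lipschitz_V_near grad_lip x).
by exists r => //; exists (n%:R * B); exact: grad_bounded_lipschitz.
Qed.
End GradientLipschitz.

Section PositiveDenominator.
Variables (R : realType) (U : normedModType R).

Lemma klipschitz_div (A : set U) (f g : U -> R) kf kg Mf Mg m : 0 < m ->
  kf.-lipschitz_A f -> kg.-lipschitz_A g ->
  (forall x, A x -> `|f x| <= Mf) -> (forall x, A x -> `|g x| <= Mg) ->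
  (forall x, A x -> m <= g x) ->
  ((kf * Mg + Mf * kg) / m ^+ 2).-lipschitz_A (fun x => f x / g x).
Proof.
move=> m_gt0 f_lip g_lip f_le g_le g_ge -[x y] [Ax Ay] /=.
have gx_gt0 := lt_le_trans m_gt0 (g_ge x Ax).
have gy_gt0 := lt_le_trans m_gt0 (g_ge y Ay).
have -> : f x / g x - f y / g y = ((f x - f y) * g y + f y * (g y - g x)) / (g x * g y).
  by field; rewrite !gt_eqF.
rewrite normrM normfV (ger0_norm (ltW (mulr_gt0 gx_gt0 gy_gt0))) ler_pdivrMr ?mulr_gt0 //.
have /= fxy := f_lip (x, y) (conj Ax Ay); have /= gyx := g_lip (y, x) (conj Ay Ax).
rewrite (distrC y) in gyx; set d := `|x - y|; set k := kf * Mg + Mf * kg.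
have num_le : `|(f x - f y) * g y + f y * (g y - g x)| <= k * d.
  apply: le_trans (ler_normD _ _) _; rewrite !normrM mulrDl.
  apply: lerD; first by rewrite mulrAC ler_pM ?g_le.
  by rewrite -mulrA ler_pM ?f_le.
have kd_ge0 : 0 <= k * d := le_trans (normr_ge0 _) num_le.
have m2_le : m ^+ 2 <= g x * g y by rewrite expr2 ler_pM ?(ltW m_gt0) ?g_ge.
apply: le_trans num_le _; rewrite -[leLHS]mulr1.
have -> : k / m ^+ 2 * d * (g x * g y) = k * d * (g x * g y / m ^+ 2).
  by field; rewrite gt_eqF.
by rewrite ler_wpM2l // ler_pdivlMr ?exprn_gt0 // mul1r.
Qed.

Lemma klipschitz_ge_half_near (K : set U) (g : U -> R) k d m :
  0 <= k -> 0 < d -> 0 < m -> (forall a, K a -> m <= g a) ->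
  k.-lipschitz_(\bigcup_(a in K) ball a d) g ->
  exists2 e, 0 < e & e <= d /\ forall y, (\bigcup_(a in K) ball a e) y -> m / 2 <= g y.
Proof.
move=> k_ge0 d_gt0 m_gt0 g_ge g_lip; pose e := Num.min d (m / 2 / (k + 1)).
have e_gt0 : 0 < e by rewrite lt_min d_gt0 !divr_gt0 ?ltr_wpDl.
have ke : k * e <= m / 2.
  have : e <= m / 2 / (k + 1) by rewrite ge_min lexx orbT.
  by rewrite ler_pdivlMr ?ltr_wpDl //; nra.
have ed : e <= d by rewrite ge_min lexx.
exists e => //; split=> // y /[dup] Ny [a Ka ay].
have Na : (\bigcup_(a in K) ball a e) a by exists a => //; exact: ballxx.
have g_lip_e : k.-lipschitz_(\bigcup_(a in K) ball a e) g.
  exact: klipschitzS (le_bigcup_ball ed) g_lip.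
have /= gay := g_lip_e (a, y) (conj Na Ny).
have : k * `|a - y| <= k * e.
  by move: ay; rewrite -ball_normE /= => /ltW; exact: ler_wpM2l.
have := ler_norm (g a - g y); have := g_ge a Ka; lra.
Qed.
End PositiveDenominator.

Lemma compact_inf_gt0 (R : realType) (T : topologicalType) (A : set T) (g : T -> R) :
  A !=set0 -> compact A -> {within A, continuous g} -> (forall x, A x -> 0 < g x) ->
  0 < inf (g @` A).
Proof.
move=> A0 cA g_cont g_gt0; have [c /set_mem Ac g_min] := compact_EVT_min A0 cA g_cont.
apply: lt_le_trans (g_gt0 c Ac) _; apply: lb_le_inf; first exact: image_nonempty.
by move=> _ [x Ax <-]; apply/g_min/mem_set.
Qed.

Lemma dist2_lt_bigcup_ball (R : realType) n (K : set 'rV[R]_n) x d :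
  K !=set0 -> dist2 x K < d -> (\bigcup_(a in K) ball a d) x.
Proof.
move=> [a0 Ka0] xK; have K_dist0 : [set norm2 (x - y) | y in K] !=set0.
  by exists (norm2 (x - a0)), a0.
have [_ [a Ka <-] xa] := inf_lt K_dist0 xK.
exists a => //; rewrite -ball_normE /= distrC.
exact: le_lt_trans (normr_le_norm2 _) xa.
Qed.

Lemma lipschitz_bounded_on_euclidean (R : realType) n p q (A : set 'rV[R]_n)
    (f g : 'rV[R]_n -> R) (G : 'rV[R]_n -> 'rV[R]_p) (H : 'rV[R]_n -> 'rV[R]_q)
    kf kg kG kH Mf Mg MG m : 0 < m -> (forall x, A x -> m <= g x) ->
  kf.-lipschitz_A f -> kg.-lipschitz_A g -> kG.-lipschitz_A G -> kH.-lipschitz_A H ->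
  (forall x, A x -> `|f x| <= Mf) -> (forall x, A x -> `|g x| <= Mg) ->
  (forall x, A x -> `|G x| <= MG) ->
  [/\ lipschitz_on_R A f, lipschitz_on_R A g, lipschitz_on_R A (fun x => f x / g x),
      lipschitz_on_V A G & lipschitz_on_V A H] /\
  [/\ has_ubound [set norm2 (G x) | x in A], has_ubound [set g x | x in A] &
      has_ubound [set f x / g x | x in A]].
Proof.
move=> m_gt0 g_ge f_lip g_lip G_lip H_lip f_le g_le G_le.
split; split.
- exact: klipschitz_lipschitz_on_R f_lip.
- exact: klipschitz_lipschitz_on_R g_lip.
- exact: klipschitz_lipschitz_on_R (klipschitz_div m_gt0 f_lip g_lip f_le g_le g_ge).
- exact: klipschitz_lipschitz_on_V G_lip.
- exact: klipschitz_lipschitz_on_V H_lip.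
- exists (p.+1%:R * MG) => _ [x /G_le G_le_x <-].
  by rewrite (le_trans (norm2_le_normr _)) // ler_wpM2l.
- by exists Mg => _ [x /g_le g_le_x <-]; exact: le_trans (ler_norm _) g_le_x.
- exists (Mf / m) => _ [x Ax <-]; have gx_gt0 := lt_le_trans m_gt0 (g_ge x Ax).
  have gx_inv_ge0 : 0 <= (g x)^-1 by rewrite invr_ge0 ltW.
  apply: le_trans (ler_wpM2r gx_inv_ge0 (ler_norm (f x))) _.
  by rewrite ler_pM ?f_le // lef_pV2 ?posrE ?g_ge.
Qed.

Lemma Fobj_sublevel_g_gt0 (R : realType) n (f g h1 h2 : 'rV[R]_n -> R) C x0 x :
  (forall x, 0 <= g x) -> sublevel (Fobj f g h1 h2 C) x0 x -> 0 < g x.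
Proof.
move=> g_ge0 [+ _]; rewrite /domF /Fobj /=.
by case: ifP => [/andP[_ gx] _|]; [rewrite lt_def gx g_ge0 | rewrite ltxx].
Qed.

Unset Implicit Arguments.
Theorem lemma4p1 (R : realType) (n : nat)
  (f g h1 h2 : 'rV[R]_n -> R) (C : set 'rV[R]_n) (x0 : 'rV[R]_n)
  (f_ge0 : forall x, 0 <= f x) (g_ge0 : forall x, 0 <= g x)
  (C_closed : closed C) (C_convex : convex_set_on C)
  (COmega : exists x, C x /\ g x != 0)
  (f_convex : convex_fun_on f)
  (g_diff : forall x, differentiable g x)
  (g_grad_loclip : locally_lipschitz_V (grad g))
  (h1_diff : forall x, differentiable h1 x)
  (h1_grad_loclip : locally_lipschitz_V (grad h1))
  (h2_convex : convex_fun_on h2)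
  (x0_dom : domF (Fobj f g h1 h2 C) x0)
  (X0_compact : compact (sublevel (Fobj f g h1 h2 C) x0)) :
  let X0 := sublevel (Fobj f g h1 h2 C) x0 in
  let mg := inf [set g x | x in X0] in
  0 < mg /\
  exists2 Delta : R, 0 < Delta &
    let XD := [set x | dist2 x X0 <= Delta] in
    [/\ (forall x, XD x -> mg / 2 <= g x),
        [/\ lipschitz_on_R XD f, lipschitz_on_R XD g,
            lipschitz_on_R XD (fun x => f x / g x),
            lipschitz_on_V XD (grad g) & lipschitz_on_V XD (grad h1)] &
        [/\ has_ubound [set norm2 (grad g x) | x in XD],
            has_ubound [set g x | x in XD] &
            has_ubound [set f x / g x | x in XD]]].
Proof.
move=> X0 mg; have X0_0 : X0 !=set0 by exists x0.
have g_cont : continuous g := fun x => differentiable_continuous (g_diff x).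
have mg_gt0 : 0 < mg := compact_inf_gt0 X0_0 X0_compact
  (continuous_subspaceT g_cont) (fun x => Fobj_sublevel_g_gt0 g_ge0).
have mg_le x : X0 x -> mg <= g x.
  by move=> X0x; apply: ge_inf; [exists 0 => _ [y _ <-] | exists x].
split=> //; have near_X0 := lipschitz_bounded_near_compact X0_compact.
have [df df_gt0 [kf [Mf [_ f_lip f_le]]]] :=
  near_X0 _ _ (fun x _ => convex_lipschitz_near f_convex x).
have [dg dg_gt0 [kg [Mg [kg_ge0 g_lip g_le]]]] :=
  near_X0 _ _ (fun x _ => differentiable_lipschitz_near g_diff g_grad_loclip x).
have [dG dG_gt0 [kG [MG [_ G_lip G_le]]]] :=
  near_X0 _ _ (fun x _ => locally_lipschitz_V_near g_grad_loclip x).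
have [dh dh_gt0 [kh [_ [_ h_lip _]]]] :=
  near_X0 _ _ (fun x _ => locally_lipschitz_V_near h1_grad_loclip x).
have [e e_gt0 [e_le g_ge]] := klipschitz_ge_half_near kg_ge0 dg_gt0 mg_gt0 mg_le g_lip.
pose D := Num.min (Num.min df dG) (Num.min dh e).
have [Ddf DdG Ddh De] : [/\ D <= df, D <= dG, D <= dh & D <= e].
  by rewrite !ge_min !lexx !orbT.
have D_gt0 : 0 < D by rewrite !lt_min df_gt0 dG_gt0 dh_gt0 e_gt0.
exists (D / 2); first by rewrite divr_gt0.
move=> XD; have XD_sub d : D <= d -> XD `<=` \bigcup_(a in X0) ball a d.
  move=> Dd x XDx; apply: le_bigcup_ball Dd _ _.
  by apply: dist2_lt_bigcup_ball X0_0 (le_lt_trans XDx _); rewrite ltr_pdivrMr //; lra.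
have Ddg := le_trans De e_le.
have g_ge_XD x : XD x -> mg / 2 <= g x by move/(XD_sub _ De)/g_ge.
have f_le_XD x : XD x -> `|f x| <= Mf by move/(XD_sub _ Ddf)/f_le.
have g_le_XD x : XD x -> `|g x| <= Mg by move/(XD_sub _ Ddg)/g_le.
have G_le_XD x : XD x -> `|grad g x| <= MG by move/(XD_sub _ DdG)/G_le.
have [] := lipschitz_bounded_on_euclidean (divr_gt0 mg_gt0 (ltr0Sn _ 1)) g_ge_XD
  (klipschitzS (XD_sub _ Ddf) f_lip) (klipschitzS (XD_sub _ Ddg) g_lip)
  (klipschitzS (XD_sub _ DdG) G_lip) (klipschitzS (XD_sub _ Ddh) h_lip)
  f_le_XD g_le_XD G_le_XD.
by split.
Qed.
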